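(* Let $\varepsilon$ be a splitting on $M$ and let $\omega$ be the 1-form of the Lie algebroid $J_1T$ with local components $(\omega_i,\omega^i_j)=(\Gamma^a_{ia},-\delta^i_j)$, i.e. $\omega(X)=X^a\Gamma^b_{ab}-X^a_a$ for $X=(X^i,X^i_j)$. Then $\delta\omega=0$, but $\omega$ is not locally exact: there is no open set $W\neq\emptyset$ and smooth function $f$ on $W$ with $\delta f=\omega$ on $W$.
   Context: $M$ is a connected smooth manifold, $\dim M=n\ge2$, summation convention. A splitting $\varepsilon$ assigns smoothly to each $(p,q)$ a linear isomorphism $\varepsilon^{p,q}:T_pM\to T_qM$ with $\varepsilon^{q,r}\circ\varepsilon^{p,q}=\varepsilon^{p,r}$, $\varepsilon^{p,p}=\mathrm{id}$; in charts $\varepsilon^{p,q}(\partial/\partial x^j)=\varepsilon^i_j(x,y)\partial/\partial y^i$, and $\Gamma^i_{jk}(x)=[\partial\varepsilon^i_k(x,y)/\partial y^j]_{y=x}$. $J_1T\to M$ is the bundle of 1-jets of vector fields; a section is locally $X=(X^i,X^i_j)$, with projection $\pi X=(X^i)\in TM$. The bracket of sections is $[X,Y]^i=X^a\partial_aY^i-Y^a\partial_aX^i$, $[X,Y]^i_j=X^a_jY^i_a-Y^a_jX^i_a+X^a\partial_aY^i_j-Y^a\partial_aX^i_j$. $J_1T$ acts on functions by $X(f)=(\pi X)(f)$. A 1-form of $J_1T$ is a section of $(J_1T)^*$, locally $(\omega_i,\omega^i_j)$ pairing as $\omega(X)=X^a\omega_a+X^a_b\omega^b_a$. Its differential is $\delta\omega(X,Y)=(\pi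 X)(\omega(Y))-(\pi Y)(\omega(X))-\omega([X,Y])$; for a function $f$, $\delta f(X)=(\pi X)(f)$, i.e. $\delta f$ has components $(\partial_if,0)$. *)

From Stdlib Require Import Reals ClassicalEpsilon.
From mathcomp Require Import all_boot.
Set Implicit Arguments.
Unset Strict Implicit.
Open Scope R_scope.

Definition sumI (I : finType) (f : I -> R) : R := foldr Rplus 0 (map f (enum I)).

Definition kdelta (I : eqType) (i j : I) : R := if i == j then 1 else 0.

Definition upd (I : finType) (x : I -> R) (i : I) (t : R) : I -> R :=
  fun k => if k == i then t else x k.

Definition has_pd (I : finType) (f : (I -> R) -> R) (i : I) (x : I -> R) (l : R) : Prop :=
  derivable_pt_lim (fun t => f (upd x i t)) (x i) l.

(** The partial derivative (its value, when it exists; an arbitrary value otherwise). *)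
Definition pd (I : finType) (f : (I -> R) -> R) (i : I) (x : I -> R) : R :=
  epsilon (inhabits 0) (fun l => has_pd f i x l).

Definition is_open (I : finType) (U : (I -> R) -> Prop) : Prop :=
  forall x, U x -> exists r, 0 < r /\
    forall y, (forall i, Rabs (y i - x i) < r) -> U y.

Definition cont_on (I : finType) (U : (I -> R) -> Prop) (f : (I -> R) -> R) : Prop :=
  forall x, U x -> forall e, 0 < e -> exists d, 0 < d /\
    forall y, U y -> (forall i, Rabs (y i - x i) < d) -> Rabs (f y - f x) < e.

Fixpoint Ck (I : finType) (k : nat) (U : (I -> R) -> Prop) (f : (I -> R) -> R) : Prop :=
  cont_on U f /\
  match k with
  | O => True
  | S k' => forall i, (forall x, U x -> exists l, has_pd f i x l) /\ Ck k' U (pd f i)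
  end.

Definition smooth (I : finType) (U : (I -> R) -> Prop) (f : (I -> R) -> R) : Prop :=
  forall k, Ck k U f.

(** Local data of a splitting over a chart domain U (open in R^n):
    eps x y i j = eps^i_j(x,y), where eps^{x,y}(d/dx^j) = eps^i_j(x,y) d/dy^i.
    Smooth jointly in (x,y) on U x U, cocycle eps^{y,z} o eps^{x,y} = eps^{x,z},
    and eps^{x,x} = id.  (Invertibility follows from these.) *)
Definition is_splitting (n : nat) (U : ('I_n -> R) -> Prop)
    (eps : ('I_n -> R) -> ('I_n -> R) -> 'I_n -> 'I_n -> R) : Prop :=
  (forall i j, smooth
       (fun z : ('I_n + 'I_n)%type -> R => U (fun k => z (inl k)) /\ U (fun k => z (inr k)))
       (fun z : ('I_n + 'I_n)%type -> R => eps (fun k => z (inl k)) (fun k => z (inr k)) i j))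
  /\ (forall x y z, U x -> U y -> U z -> forall i j,
        eps x z i j = sumI (fun k => eps y z i k * eps x y k j))
  /\ (forall x, U x -> forall i j, eps x x i j = kdelta i j).

Definition Gamma (n : nat) (eps : ('I_n -> R) -> ('I_n -> R) -> 'I_n -> 'I_n -> R)
    (i j k : 'I_n) (x : 'I_n -> R) : R :=
  pd (fun y => eps x y i k) j x.

(** Local sections of J_1T: X = (X^i, X^i_j), with X.2 x i j = X^i_j. *)
Definition jsec (n : nat) : Type :=
  ((('I_n -> R) -> 'I_n -> R) * (('I_n -> R) -> 'I_n -> 'I_n -> R))%type.

Definition smooth_sec (n : nat) (W : ('I_n -> R) -> Prop) (X : jsec n) : Prop :=
  (forall i, smooth W (fun x => X.1 x i)) /\ (forall i j, smooth W (fun x => X.2 x i j)).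

Definition brv (n : nat) (X Y : jsec n) (x : 'I_n -> R) (i : 'I_n) : R :=
  sumI (fun a => X.1 x a * pd (fun z => Y.1 z i) a x - Y.1 x a * pd (fun z => X.1 z i) a x).

Definition brm (n : nat) (X Y : jsec n) (x : 'I_n -> R) (i j : 'I_n) : R :=
  sumI (fun a => X.2 x a j * Y.2 x i a - Y.2 x a j * X.2 x i a)
  + sumI (fun a => X.1 x a * pd (fun z => Y.2 z i j) a x
                   - Y.1 x a * pd (fun z => X.2 z i j) a x).

Definition bracket (n : nat) (X Y : jsec n) : jsec n := (brv X Y, brm X Y).

(** 1-forms of J_1T: (omega_i, omega^i_j), with om.2 x i j = omega^i_j. *)
Definition oneform (n : nat) : Type :=
  ((('I_n -> R) -> 'I_n -> R) * (('I_n -> R) -> 'I_n -> 'I_n -> R))%type.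

Definition ev (n : nat) (om : oneform n) (X : jsec n) (x : 'I_n -> R) : R :=
  sumI (fun a => X.1 x a * om.1 x a)
  + sumI (fun a => sumI (fun b => X.2 x a b * om.2 x b a)).

Definition vf (n : nat) (X : jsec n) (g : ('I_n -> R) -> R) (x : 'I_n -> R) : R :=
  sumI (fun c => X.1 x c * pd g c x).

Definition dform (n : nat) (om : oneform n) (X Y : jsec n) (x : 'I_n -> R) : R :=
  vf X (ev om Y) x - vf Y (ev om X) x - ev om (bracket X Y) x.

Definition dfun (n : nat) (f : ('I_n -> R) -> R) : oneform n :=
  (fun x i => pd f i x, fun _ _ _ => 0).

Definition omega (n : nat) (eps : ('I_n -> R) -> ('I_n -> R) -> 'I_n -> 'I_n -> R) : oneform n :=
  (fun x i => sumI (fun a => Gamma eps a i a x), fun _ i j => - kdelta i j).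

(* Write [g_a = Gamma^b_{ab}], so that [omega(X) = X^a g_a - X^a_a].  The trace part
   [X |-> X^a_a] is closed because the trace of a commutator vanishes, while the
   pulled-back part gives [X^c Y^a (d_c g_a - d_a g_c)]; hence [delta omega = 0] as soon
   as [g] is closed.  By the cocycle identity [g_a(y) = d_a eps^b_m(x, .)(y) eps^m_b(y, x)],
   and since [eps(., x)] inverts [eps(x, .)], at [y = x] this gives
   [d_c g_a = d_c d_a eps^b_b(x, .) - tr (d_a eps(x, .) d_c eps(x, .))],
   which is symmetric in [a, c] by Schwarz's theorem and the cyclicity of the trace.
   Finally [omega] is not exact: [delta f] has vanishing matrix part, while
   [omega^i_i = -1]. *)

From HB Require Import structures.
From Stdlib Require Import Reals Lra ClassicalEpsilon FunctionalExtensionality.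
From mathcomp Require Import all_boot.
From Coquelicot Require Import Coquelicot.
Open Scope R_scope.
Set Implicit Arguments.
Unset Strict Implicit.

Lemma Rplus_assoc_law : associative Rplus.
Proof. by move=> x y z; rewrite Rplus_assoc. Qed.

HB.instance Definition _ :=
  Monoid.isComLaw.Build R 0 Rplus Rplus_assoc_law Rplus_comm Rplus_0_l.
HB.instance Definition _ := Monoid.isMulLaw.Build R 0 Rmult Rmult_0_l Rmult_0_r.
HB.instance Definition _ :=
  Monoid.isAddLaw.Build R Rmult Rplus Rmult_plus_distr_r Rmult_plus_distr_l.

Lemma sumIE (I : finType) (f : I -> R) : sumI f = \big[Rplus/0]_i f i.
Proof. by rewrite /sumI -big_enum foldrE big_map. Qed.

Lemma kdeltaC (I : eqType) (i j : I) : kdelta i j = kdelta j i.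
Proof. by rewrite /kdelta eq_sym. Qed.

Section FiniteSums.
Variable I : finType.
Implicit Types f g : I -> R.

Lemma eq_sumI f g : (forall a, f a = g a) -> sumI f = sumI g.
Proof. by move=> fg; rewrite !sumIE; apply: eq_bigr => a _. Qed.

Lemma sumID f g : sumI (fun a => f a + g a) = sumI f + sumI g.
Proof. by rewrite !sumIE big_split. Qed.

Lemma sumI_distrr k f : sumI (fun a => k * f a) = k * sumI f.
Proof. by rewrite !sumIE big_distrr. Qed.

Lemma sumI_distrl k f : sumI (fun a => f a * k) = sumI f * k.
Proof. by rewrite !sumIE big_distrl. Qed.

Lemma sumIN f : sumI (fun a => - f a) = - sumI f.
Proof.
transitivity (sumI (fun a => -1 * f a)); first by apply: eq_sumI => a; ring.
by rewrite sumI_distrr; ring.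
Qed.

Lemma sumIB f g : sumI (fun a => f a - g a) = sumI f - sumI g.
Proof. by rewrite /Rminus -sumIN -sumID. Qed.

Lemma exchange_sumI (J : finType) (F : I -> J -> R) :
  sumI (fun a => sumI (fun b => F a b)) = sumI (fun b => sumI (fun a => F a b)).
Proof.
rewrite !sumIE; under eq_bigr => a _ do rewrite sumIE.
by rewrite exchange_big; apply: eq_bigr => b _; rewrite sumIE.
Qed.

Lemma sumI_kdelta f a : sumI (fun b => f b * kdelta b a) = f a.
Proof.
rewrite sumIE (bigD1 a) //= /kdelta eqxx Rmult_1_r big1 ?Rplus_0_r // => b /negbTE ->.
exact: Rmult_0_r.
Qed.

Lemma sumI_kdelta_l f a : sumI (fun b => kdelta a b * f b) = f a.
Proof. by rewrite -[RHS](sumI_kdelta f); apply: eq_sumI => b; rewrite kdeltaC Rmult_comm. Qed.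

Lemma trace_commutator (A B : I -> I -> R) :
  sumI (fun a => sumI (fun b => A b a * B a b - B b a * A a b)) = 0.
Proof.
under eq_sumI => a do rewrite sumIB.
rewrite sumIB [X in _ - X]exchange_sumI.
rewrite (@eq_sumI (fun b => sumI (fun a => B b a * A a b))
                  (fun b => sumI (fun a => A a b * B b a))) ?Rminus_diag // => b.
by apply: eq_sumI => a; ring.
Qed.
End FiniteSums.

Lemma derivable_pt_lim_loc (f g : R -> R) x l r : 0 < r ->
  (forall t, Rabs (t - x) < r -> f t = g t) ->
  derivable_pt_lim f x l -> derivable_pt_lim g x l.
Proof.
move=> r0 fg df e e0; have [d Hd] := df e e0.
have m0 : 0 < Rmin d r by apply: Rmin_pos; [apply: cond_pos|].
exists (mkposreal _ m0) => h h0 /= hm.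
have [hd hr] : Rabs h < d /\ Rabs h < r.
  by split; apply: Rlt_le_trans hm _; [apply: Rmin_l | apply: Rmin_r].
rewrite -!fg ?Rminus_diag ?Rabs_R0 //; first exact: Hd.
by replace (x + h - x) with h by ring.
Qed.

Lemma Derive_pt_lim f x l : derivable_pt_lim f x l -> Derive f x = l.
Proof. by move=> df; apply: is_derive_unique; apply/is_derive_Reals. Qed.

Lemma ex_derive_pt_lim f x l : derivable_pt_lim f x l -> ex_derive f x.
Proof. by move=> df; exists l; apply/is_derive_Reals. Qed.

Lemma upd_id (I : finType) (p : I -> R) i : upd p i (p i) = p.
Proof. by apply: functional_extensionality => k; rewrite /upd; case: eqP => [->|]. Qed.

Lemma open_line (I : finType) (V : (I -> R) -> Prop) p i : is_open V -> V p ->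
  exists r, 0 < r /\ forall t, Rabs (t - p i) < r -> V (upd p i t).
Proof.
move=> Vo Vp; have [r [r0 Hr]] := Vo p Vp; exists r; split => // t Ht.
by apply: Hr => k; rewrite /upd; case: eqP => [->|_] //; rewrite Rminus_diag Rabs_R0.
Qed.

Section PartialDerivatives.
Variables (I : finType) (i : I) (p : I -> R).
Implicit Types f g : (I -> R) -> R.

Lemma pdE f l : has_pd f i p l -> pd f i p = l.
Proof.
move=> df; have ex : exists l, has_pd f i p l by exists l.
exact: uniqueness_limite (epsilon_spec (inhabits 0) _ ex) df.
Qed.

Lemma has_pd_cst c : has_pd (fun=> c) i p 0.
Proof. exact: derivable_pt_lim_const. Qed.

Lemma has_pdD f g lf lg : has_pd f i p lf -> has_pd g i p lg ->
  has_pd (fun y => f y + g y) i p (lf + lg).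
Proof. exact: derivable_pt_lim_plus. Qed.

Lemma has_pdN f lf : has_pd f i p lf -> has_pd (fun y => - f y) i p (- lf).
Proof. exact: derivable_pt_lim_opp. Qed.

Lemma has_pdB f g lf lg : has_pd f i p lf -> has_pd g i p lg ->
  has_pd (fun y => f y - g y) i p (lf - lg).
Proof. by move=> df dg; apply: has_pdD df (has_pdN dg). Qed.

Lemma has_pdM f g lf lg : has_pd f i p lf -> has_pd g i p lg ->
  has_pd (fun y => f y * g y) i p (lf * g p + f p * lg).
Proof. by move=> df dg; have := derivable_pt_lim_mult _ _ _ _ _ df dg; rewrite /= upd_id. Qed.

Lemma has_pd_sum (J : finType) (F : J -> (I -> R) -> R) L :
  (forall a, has_pd (F a) i p (L a)) ->
  has_pd (fun y => sumI (fun a => F a y)) i p (sumI L).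
Proof.
rewrite /has_pd /sumI => dF; elim: (enum J) => [|a s IH] /=.
  exact: derivable_pt_lim_const.
exact: derivable_pt_lim_plus (dF a) IH.
Qed.

Lemma has_pd_loc V f g l : is_open V -> V p -> (forall y, V y -> f y = g y) ->
  has_pd f i p l -> has_pd g i p l.
Proof.
move=> Vo Vp fg; have [r [r0 Hr]] := open_line i Vo Vp.
by apply: derivable_pt_lim_loc r0 _ => t /Hr /fg.
Qed.

End PartialDerivatives.

Lemma cont_on_sub (I : finType) (V V' : (I -> R) -> Prop) f :
  (forall y, V' y -> V y) -> cont_on V f -> cont_on V' f.
Proof.
move=> V'V cf x /V'V Vx e e0; have [d [d0 Hd]] := cf x Vx e e0.
by exists d; split => // y /V'V; apply: Hd.
Qed.

Section SmoothFunctions.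
Variables (I : finType) (V : (I -> R) -> Prop).
Implicit Types f : (I -> R) -> R.

Lemma Ck_cont k f : Ck k V f -> cont_on V f.
Proof. by case: k => [|k] []. Qed.

Lemma Ck_has_pd k f i p : Ck k.+1 V f -> V p -> has_pd f i p (pd f i p).
Proof. by move=> [_ /(_ i) [ex _]] /ex [l dl]; rewrite (pdE dl). Qed.

Lemma Ck_pd k f i : Ck k.+1 V f -> Ck k V (pd f i).
Proof. by move=> [_ /(_ i) []]. Qed.

Lemma Ck_sub k (V' : (I -> R) -> Prop) f : (forall y, V' y -> V y) -> Ck k V f -> Ck k V' f.
Proof.
move=> V'V; elim: k f => [|k IH] f [cf df]; first by split => //; apply: cont_on_sub cf.
split; first exact: cont_on_sub cf.
move=> i; have [ex dfk] := df i; split; last exact: IH.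
by move=> x /V'V; apply: ex.
Qed.

End SmoothFunctions.

Section CoordinateEmbedding.
Variables (I J : finType) (phi : (J -> R) -> (I -> R)) (s : J -> I).
Hypothesis phi_upd : forall y j t, phi (upd y j t) = upd (phi y) (s j) t.
Hypothesis phi_coord : forall y j, phi y (s j) = y j.
Hypothesis phi_contract : forall y y' d, 0 < d -> (forall j, Rabs (y' j - y j) < d) ->
  forall i, Rabs (phi y' i - phi y i) < d.
Implicit Types f : (I -> R) -> R.

Lemma phi_line f y j : (fun t => f (phi (upd y j t))) = (fun t => f (upd (phi y) (s j) t)).
Proof. by apply: functional_extensionality => t; rewrite phi_upd. Qed.

Lemma pd_comp f j : pd (fun y => f (phi y)) j = fun y => pd f (s j) (phi y).
Proof. by apply: functional_extensionality => y; rewrite /pd /has_pd phi_line phi_coord. Qed.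

Lemma has_pd_comp f j y l : has_pd f (s j) (phi y) l -> has_pd (fun y => f (phi y)) j y l.
Proof. by rewrite /has_pd phi_line phi_coord. Qed.

Lemma cont_on_comp V f : cont_on V f -> cont_on (fun y => V (phi y)) (fun y => f (phi y)).
Proof.
move=> cf x Vx e e0; have [d [d0 Hd]] := cf _ Vx e e0.
by exists d; split => // y Vy /(phi_contract d0); apply: Hd.
Qed.

Lemma Ck_comp k V f : Ck k V f -> Ck k (fun y => V (phi y)) (fun y => f (phi y)).
Proof.
elim: k f => [|k IH] f [cf df]; first by split => //; apply: cont_on_comp.
split; first exact: cont_on_comp.
move=> j; have [ex dfk] := df (s j); split.
  by move=> y /ex [l dl]; exists l; apply: has_pd_comp.
by rewrite pd_comp; apply: IH.
Qed.

End CoordinateEmbedding.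

(** * Symmetry of second partial derivatives *)

Definition plane (I : finType) (p : I -> R) (a c : I) (u v : R) : I -> R :=
  upd (upd p a u) c v.

Section Plane.
Variables (I : finType) (p : I -> R) (a c : I).
Hypothesis ac : a != c.

Lemma plane_l u v : plane p a c u v a = u.
Proof. by rewrite /plane /upd (negbTE ac) eqxx. Qed.

Lemma plane_r u v : plane p a c u v c = v.
Proof. by rewrite /plane /upd eqxx. Qed.

Lemma upd_plane_l u v z : upd (plane p a c u v) a z = plane p a c z v.
Proof.
apply: functional_extensionality => k; rewrite /plane /upd.
by case: (eqVneq k a) => [->|_]; rewrite ?(negbTE ac).
Qed.

Lemma upd_plane_r u v z : upd (plane p a c u v) c z = plane p a c u z.
Proof. by apply: functional_extensionality => k; rewrite /plane /upd; case: eqP. Qed.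

Lemma plane_center : plane p a c (p a) (p c) = p.
Proof. by rewrite /plane !upd_id. Qed.

Lemma plane_swap u v : plane p a c u v = plane p c a v u.
Proof.
apply: functional_extensionality => k; rewrite /plane /upd.
by case: (eqVneq k a) => [->|_]; rewrite ?(negbTE ac).
Qed.

Lemma plane_near u v d : Rabs (u - p a) < d -> Rabs (v - p c) < d ->
  forall k, Rabs (plane p a c u v k - p k) < d.
Proof.
move=> du dv k; rewrite /plane /upd.
case: eqP => [->|_] //; case: eqP => [->|_] //.
by rewrite Rminus_diag Rabs_R0; apply: Rle_lt_trans du; apply: Rabs_pos.
Qed.

End Plane.

Section MixedPartials.
Variables (I : finType) (V : (I -> R) -> Prop) (p : I -> R) (a c : I) (r : R).
Hypothesis ac : a != c.
Hypothesis V_plane : forall u v, Rabs (u - p a) < r -> Rabs (v - p c) < r ->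
  V (plane p a c u v).
Implicit Types h g : (I -> R) -> R.

Lemma derivable_plane_l k h u v : Ck k.+1 V h ->
  Rabs (u - p a) < r -> Rabs (v - p c) < r ->
  derivable_pt_lim (fun t => h (plane p a c t v)) u (pd h a (plane p a c u v)).
Proof.
move=> hk du dv; have := Ck_has_pd a hk (V_plane du dv).
rewrite /has_pd plane_l //.
by have -> : (fun t => h (upd (plane p a c u v) a t)) = (fun t => h (plane p a c t v))
  by apply: functional_extensionality => t; rewrite upd_plane_l.
Qed.

Lemma derivable_plane_r k h u v : Ck k.+1 V h ->
  Rabs (u - p a) < r -> Rabs (v - p c) < r ->
  derivable_pt_lim (fun t => h (plane p a c u t)) v (pd h c (plane p a c u v)).
Proof.
move=> hk du dv; have := Ck_has_pd c hk (V_plane du dv).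
rewrite /has_pd plane_r.
by have -> : (fun t => h (upd (plane p a c u v) c t)) = (fun t => h (plane p a c u t))
  by apply: functional_extensionality => t; rewrite upd_plane_r.
Qed.

Lemma derivable_mixed_plane g u v : Ck 2 V g ->
  Rabs (u - p a) < r -> Rabs (v - p c) < r ->
  derivable_pt_lim (fun z => Derive (fun t => g (plane p a c z t)) v) u
    (pd (pd g c) a (plane p a c u v)).
Proof.
move=> g2 du dv; have r' : 0 < r - Rabs (u - p a) by lra.
apply: derivable_pt_lim_loc r' _ (derivable_plane_l (Ck_pd c g2) du dv) => z dz.
have dz' : Rabs (z - p a) < r.
  have := Rabs_triang (z - u) (u - p a).
  by replace (z - u + (u - p a)) with (z - p a) by ring; lra.
by rewrite (Derive_pt_lim (derivable_plane_r g2 dz' dv)).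
Qed.

Lemma continuity_2d_plane h (F : R -> R -> R) : 0 < r -> V p -> cont_on V h ->
  (forall u v, Rabs (u - p a) < r -> Rabs (v - p c) < r -> F u v = h (plane p a c u v)) ->
  continuity_2d_pt F (p a) (p c).
Proof.
move=> r0 Vp ch Fh e; have [d [d0 Hd]] := ch p Vp e (cond_pos e).
have m0 : 0 < Rmin r d by apply: Rmin_pos.
exists (mkposreal _ m0) => u v /= du dv.
have [dur dud] : Rabs (u - p a) < r /\ Rabs (u - p a) < d.
  by split; apply: Rlt_le_trans du _; [apply: Rmin_l | apply: Rmin_r].
have [dvr dvd] : Rabs (v - p c) < r /\ Rabs (v - p c) < d.
  by split; apply: Rlt_le_trans dv _; [apply: Rmin_l | apply: Rmin_r].
rewrite !Fh ?Rminus_diag ?Rabs_R0 // plane_center.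
exact: Hd (V_plane dur dvr) (plane_near dud dvd).
Qed.

End MixedPartials.

Lemma pd_comm (I : finType) (V : (I -> R) -> Prop) g p (a c : I) :
  is_open V -> V p -> Ck 2 V g -> pd (pd g c) a p = pd (pd g a) c p.
Proof.
move=> Vo Vp g2; have [->|ac] := eqVneq a c; first by [].
have ca : c != a by rewrite eq_sym.
have [r [r0 Hr]] := Vo p Vp.
have Vac u v : Rabs (u - p a) < r -> Rabs (v - p c) < r -> V (plane p a c u v).
  by move=> du dv; apply: Hr; apply: plane_near.
have Vca v u : Rabs (v - p c) < r -> Rabs (u - p a) < r -> V (plane p c a v u).
  by move=> dv du; rewrite -plane_swap //; apply: Vac.
have mixed_ac u v (du : Rabs (u - p a) < r) (dv : Rabs (v - p c) < r) :=
  derivable_mixed_plane ac Vac g2 du dv.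
have mixed_ca u v : Rabs (u - p a) < r -> Rabs (v - p c) < r ->
    derivable_pt_lim (fun z => Derive (fun t => g (plane p a c t z)) u) v
      (pd (pd g a) c (plane p a c u v)).
  move=> du dv; rewrite plane_swap //.
  have -> : (fun z => Derive (fun t => g (plane p a c t z)) u)
          = (fun z => Derive (fun t => g (plane p c a z t)) u).
    apply: functional_extensionality => z; f_equal.
    by apply: functional_extensionality => t; rewrite plane_swap.
  exact (derivable_mixed_plane ca Vca g2 dv du).
have d0 : forall q, Rabs (q - q) < r by move=> q; rewrite Rminus_diag Rabs_R0.
have := @Schwarz (fun u v => g (plane p a c u v)) (p a) (p c); cbv beta.
rewrite (Derive_pt_lim (mixed_ac _ _ (d0 _) (d0 _))).
rewrite (Derive_pt_lim (mixed_ca _ _ (d0 _) (d0 _))) plane_center.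
apply.
- exists (mkposreal _ r0) => u v /= du dv; split; [|split; [|split]].
  + exact: ex_derive_pt_lim (derivable_plane_l ac Vac g2 du dv).
  + exact: ex_derive_pt_lim (derivable_plane_r Vac g2 du dv).
  + exact: ex_derive_pt_lim (mixed_ac u v du dv).
  + exact: ex_derive_pt_lim (mixed_ca u v du dv).
- apply: (continuity_2d_plane Vac r0 Vp (Ck_cont (Ck_pd a (Ck_pd c g2)))).
  by move=> u v du dv; apply: Derive_pt_lim (mixed_ac u v du dv).
- apply: (continuity_2d_plane Vac r0 Vp (Ck_cont (Ck_pd c (Ck_pd a g2)))).
  by move=> u v du dv; apply: Derive_pt_lim (mixed_ca u v du dv).
Qed.

(** * Derivatives of a splitting *)

Section Splitting.
Variables (n : nat) (U : ('I_n -> R) -> Prop)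
  (eps : ('I_n -> R) -> ('I_n -> R) -> 'I_n -> 'I_n -> R).
Hypotheses (U_open : is_open U) (eps_splitting : is_splitting U eps).
Variable x : 'I_n -> R.
Hypothesis Ux : U x.

Let pair_l (y : 'I_n -> R) : ('I_n + 'I_n)%type -> R :=
  fun k => match k with inl k => y k | inr k => x k end.
Let pair_r (y : 'I_n -> R) : ('I_n + 'I_n)%type -> R :=
  fun k => match k with inl k => x k | inr k => y k end.

Lemma eps_smooth_l i j k : Ck k U (fun y => eps y x i j).
Proof.
have [eps_smooth _] := eps_splitting.
apply: Ck_sub (Ck_comp (phi := pair_l) (s := inl) _ _ _ (eps_smooth i j k)).
- by move=> y Uy; split.
- by move=> y l t; apply: functional_extensionality => -[].
- by [].
- by move=> y y' d d0 dy [l|l] /=; [apply: dy | rewrite Rminus_diag Rabs_R0].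
Qed.

Lemma eps_smooth_r i j k : Ck k U (fun y => eps x y i j).
Proof.
have [eps_smooth _] := eps_splitting.
apply: Ck_sub (Ck_comp (phi := pair_r) (s := inr) _ _ _ (eps_smooth i j k)).
- by move=> y Uy; split.
- by move=> y l t; apply: functional_extensionality => -[].
- by [].
- by move=> y y' d d0 dy [l|l] /=; [rewrite Rminus_diag Rabs_R0 | apply: dy].
Qed.

Let dE a i j := pd (fun y => eps x y i j) a.

Lemma has_pd_eps_r a i j y : U y -> has_pd (fun y => eps x y i j) a y (dE a i j y).
Proof. by rewrite /dE; apply: Ck_has_pd (eps_smooth_r i j 1%N). Qed.

Lemma Gamma_cocycle y a i k : U y ->
  Gamma eps i a k y = sumI (fun m => dE a i m y * eps y x m k).
Proof.
move=> Uy; have [_ [cocycle _]] := eps_splitting.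
rewrite /Gamma; apply: pdE.
apply: (has_pd_loc (f := fun z => sumI (fun m => eps x z i m * eps y x m k)) U_open Uy).
  by move=> z Uz; rewrite (cocycle y x z Uy Ux Uz).
have -> : sumI (fun m => dE a i m y * eps y x m k)
        = sumI (fun m => dE a i m y * eps y x m k + eps x y i m * 0).
  by apply: eq_sumI => m; ring.
exact: has_pd_sum (fun m => has_pdM (has_pd_eps_r a i m Uy) (has_pd_cst _ _ _)).
Qed.

(* Differentiate [eps(x, y) eps(y, x) = id] at [y = x]. *)
Lemma pd_eps_l c i j : pd (fun y => eps y x i j) c x = - dE c i j x.
Proof.
have [_ [cocycle eps_id]] := eps_splitting.
have d_id : has_pd (fun y => sumI (fun k => eps x y i k * eps y x k j)) c x
    (sumI (fun k => dE c i k x * eps x x k j + eps x x i k * pd (fun y => eps y x k j) c x)).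
  apply: has_pd_sum => k; apply: has_pdM; first exact: has_pd_eps_r.
  exact (Ck_has_pd c (eps_smooth_l k j 1%N) Ux).
have d_cst : has_pd (fun y => sumI (fun k => eps x y i k * eps y x k j)) c x 0.
  apply: (has_pd_loc (f := fun=> kdelta i j) U_open Ux); last exact: has_pd_cst.
  by move=> y Uy; rewrite -(cocycle y x y Uy Ux Uy) eps_id.
have := uniqueness_limite _ _ _ _ d_id d_cst.
under eq_sumI => k do rewrite !eps_id //.
by rewrite sumID sumI_kdelta sumI_kdelta_l; lra.
Qed.

Let dGamma a c := sumI (fun b => pd (dE a b b) c x)
  - sumI (fun b => sumI (fun m => dE a b m x * dE c m b x)).

Lemma has_pd_Gamma_trace a c :
  has_pd (fun y => sumI (fun b => Gamma eps b a b y)) c x (dGamma a c).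
Proof.
have [_ [_ eps_id]] := eps_splitting.
apply: (has_pd_loc (f := fun y => sumI (fun b => sumI (fun m => dE a b m y * eps y x m b)))
          U_open Ux).
  by move=> y Uy; apply: eq_sumI => b; rewrite Gamma_cocycle.
have -> : dGamma a c = sumI (fun b => sumI (fun m =>
    pd (dE a b m) c x * eps x x m b + dE a b m x * pd (fun y => eps y x m b) c x)).
  rewrite /dGamma -sumIB; apply: eq_sumI => b.
  under [RHS]eq_sumI => m do rewrite eps_id //.
  rewrite sumID sumI_kdelta /Rminus -sumIN; congr (_ + _); apply: eq_sumI => m.
  by rewrite pd_eps_l; ring.
apply: has_pd_sum => b; apply: has_pd_sum => m; apply: has_pdM.
  exact (Ck_has_pd c (Ck_pd a (eps_smooth_r b m 2%N)) Ux).
exact (Ck_has_pd c (eps_smooth_l m b 1%N) Ux).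
Qed.

Lemma dGamma_sym a c : dGamma a c = dGamma c a.
Proof.
rewrite /dGamma; congr (_ - _).
  apply: eq_sumI => b; exact (pd_comm c a U_open Ux (eps_smooth_r b b 2%N)).
by rewrite exchange_sumI; apply: eq_sumI => b; apply: eq_sumI => m; ring.
Qed.

End Splitting.

(** * Closedness of trace-shifted 1-forms *)

Lemma dform_trace_algebra (I : finType) (Xv Yv g : I -> R)
    (Xm Ym dXv dYv dXt dYt dg : I -> I -> R) :
  (forall a c, dg a c = dg c a) ->
  sumI (fun c => Xv c * (sumI (fun a => dYv c a * g a + Yv a * dg a c)
                         - sumI (fun a => dYt c a)))
  - sumI (fun c => Yv c * (sumI (fun a => dXv c a * g a + Xv a * dg a c)
                           - sumI (fun a => dXt c a)))
  - (sumI (fun a => sumI (fun c => Xv c * dYv c a - Yv c * dXv c a) * g a)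
     - sumI (fun a => sumI (fun b => Xm b a * Ym a b - Ym b a * Xm a b)
                      + sumI (fun c => Xv c * dYt c a - Yv c * dXt c a)))
  = 0.
Proof.
move=> dg_sym.
have expand (Z : I -> R) (P Q T : I -> I -> R) :
    sumI (fun c => Z c * (sumI (fun a => P c a + Q c a) - sumI (fun a => T c a)))
    = sumI (fun c => Z c * sumI (fun a => P c a)) + sumI (fun c => Z c * sumI (fun a => Q c a))
      - sumI (fun c => Z c * sumI (fun a => T c a)).
  rewrite -sumID -sumIB; apply: eq_sumI => c.
  by rewrite sumID Rmult_minus_distr_l Rmult_plus_distr_l.
have transport :
    sumI (fun a => sumI (fun c => Xv c * dYv c a - Yv c * dXv c a) * g a)
    = sumI (fun c => Xv c * sumI (fun a => dYv c a * g a))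
      - sumI (fun c => Yv c * sumI (fun a => dXv c a * g a)).
  rewrite -sumIB; under eq_sumI => a do rewrite -sumI_distrl.
  rewrite exchange_sumI; apply: eq_sumI => c.
  by rewrite -!sumI_distrr -sumIB; apply: eq_sumI => a; ring.
have curvature : sumI (fun c => Xv c * sumI (fun a => Yv a * dg a c))
               = sumI (fun c => Yv c * sumI (fun a => Xv a * dg a c)).
  under eq_sumI => c do rewrite -sumI_distrr.
  under [RHS]eq_sumI => c do rewrite -sumI_distrr.
  by rewrite exchange_sumI; apply: eq_sumI => a; apply: eq_sumI => c; rewrite dg_sym; ring.
have trace :
    sumI (fun a => sumI (fun b => Xm b a * Ym a b - Ym b a * Xm a b)
                   + sumI (fun c => Xv c * dYt c a - Yv c * dXt c a))
    = sumI (fun c => Xv c * sumI (fun a => dYt c a))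
      - sumI (fun c => Yv c * sumI (fun a => dXt c a)).
  rewrite sumID trace_commutator Rplus_0_l exchange_sumI -sumIB.
  by apply: eq_sumI => c; rewrite sumIB !sumI_distrr.
rewrite (expand Xv (fun c a => dYv c a * g a) (fun c a => Yv a * dg a c) dYt).
rewrite (expand Yv (fun c a => dXv c a * g a) (fun c a => Xv a * dg a c) dXt).
rewrite transport trace curvature; ring.
Qed.

Section TraceForms.
Variables (n : nat) (om : oneform n) (W : ('I_n -> R) -> Prop) (x : 'I_n -> R).
Hypothesis om_trace : forall y i j, om.2 y i j = - kdelta i j.
Variable dom : 'I_n -> 'I_n -> R.
Hypothesis has_pd_om : forall a c, has_pd (fun y => om.1 y a) c x (dom a c).
Hypothesis dom_sym : forall a c, dom a c = dom c a.
Hypothesis Wx : W x.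

Lemma ev_trace (Z : jsec n) y :
  ev om Z y = sumI (fun a => Z.1 y a * om.1 y a) - sumI (fun a => Z.2 y a a).
Proof.
rewrite /ev /Rminus -sumIN; congr (_ + _); apply: eq_sumI => a.
rewrite -(sumI_kdelta (fun b => - Z.2 y a b)); apply: eq_sumI => b.
by rewrite om_trace -Ropp_mult_distr_r -Ropp_mult_distr_l.
Qed.

Lemma has_pd_ev (Z : jsec n) c : smooth_sec W Z ->
  has_pd (ev om Z) c x
    (sumI (fun a => pd (fun y => Z.1 y a) c x * om.1 x a + Z.1 x a * dom a c)
     - sumI (fun a => pd (fun y => Z.2 y a a) c x)).
Proof.
move=> [Z1 Z2]; rewrite (functional_extensionality _ _ (ev_trace Z)).
apply: has_pdB; apply: has_pd_sum => a; last exact (Ck_has_pd c (Z2 a a 1%N) Wx).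
by apply: has_pdM; [exact (Ck_has_pd c (Z1 a 1%N) Wx) | apply: has_pd_om].
Qed.

Lemma dform_trace X Y : smooth_sec W X -> smooth_sec W Y -> dform om X Y x = 0.
Proof.
move=> HX HY; rewrite /dform /vf ev_trace.
under eq_sumI => c do rewrite (pdE (has_pd_ev c HY)).
under [X in _ - X - _]eq_sumI => c do rewrite (pdE (has_pd_ev c HX)).
exact: dform_trace_algebra.
Qed.

End TraceForms.

Theorem proposition6 (n : nat) (U : ('I_n -> R) -> Prop)
    (eps : ('I_n -> R) -> ('I_n -> R) -> 'I_n -> 'I_n -> R) :
  (2 <= n)%N -> is_open U -> is_splitting U eps ->
  (forall (W : ('I_n -> R) -> Prop) (X Y : jsec n),
      is_open W -> (forall x, W x -> U x) ->
      smooth_sec W X -> smooth_sec W Y ->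
      forall x, W x -> dform (omega eps) X Y x = 0)
  /\
  ~ (exists (W : ('I_n -> R) -> Prop) (f : ('I_n -> R) -> R),
      is_open W /\ (exists x, W x) /\ (forall x, W x -> U x) /\ smooth W f /\
      forall x, W x ->
        (forall i, (dfun f).1 x i = (omega eps).1 x i) /\
        (forall i j, (dfun f).2 x i j = (omega eps).2 x i j)).
Proof.
move=> n2 U_open eps_splitting; split.
  move=> W X Y _ WU HX HY x /[dup] Wx /WU Ux.
  have omega_trace : forall y i j, (omega eps).2 y i j = - kdelta i j by [].
  exact (dform_trace omega_trace (has_pd_Gamma_trace U_open eps_splitting Ux)
           (dGamma_sym U_open eps_splitting Ux) Wx HX HY).
move=> [W [f [_ [[y Wy] [_ [_ df]]]]]].
have i : 'I_n by exists 0%N; apply: leq_trans n2.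
by have := (df y Wy).2 i i; rewrite /= /kdelta eqxx; lra.
Qed.
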